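(* For each $\mathcal{H} \in \mathbb{R}_D^{[2,2]}$ whose Hermitian flattening matrix has the form \[ \mathfrak{m}(\mathcal{H}) = \begin{pmatrix} A & C \\ C & B \end{pmatrix}, \quad A, B, C \in \mathcal{S}^2, \] there exist invertible matrices $P,Q\in \mathbb{R}^{2\times 2}$ such that $\tilde{\mathcal{H}}:=(P,Q)\times_{cong} \mathcal{H}$ has the flattening \[ \mathfrak{m}(\tilde{\mathcal{H}}) = \begin{pmatrix} sI_2 & D \\ D & s\tilde{B} \end{pmatrix} - s \begin{pmatrix} uu^T & 0 \\ 0 & 0 \end{pmatrix}, \] where $s\in \{0,1,-1\}$, $D$ is a real diagonal matrix, $u\in \mathbb{R}^{2}$ and $\tilde{B} \in \mathcal{S}^2$. In particular, $u=0$ if one of $A,B$ is positive (or negative) definite, and $s=0$ if $A=B=0$.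
   Context: For vectors $v_1,v_2\in\mathbb{C}^2$, $[v_1,v_2]_{\otimes_h} := v_1\otimes v_2\otimes \overline{v_1}\otimes\overline{v_2}$. A real Hermitian tensor $\mathcal{H}\in\mathbb{R}^{2\times2\times2\times2}$ (i.e., $\mathcal{H}_{i_1i_2j_1j_2}=\mathcal{H}_{j_1j_2i_1i_2}$, all entries real) is called $\mathbb{R}$-Hermitian decomposable if $\mathcal{H}=\sum_{i=1}^r \lambda_i [u_i^1,u_i^2]_{\otimes_h}$ with real vectors $u_i^j\in\mathbb{R}^2$ and real scalars $\lambda_i$; $\mathbb{R}_D^{[2,2]}$ denotes the subspace of such tensors. $\mathcal{S}^2$ is the set of $2\times 2$ real symmetric matrices, and $I_2$ the $2\times2$ identity. The Hermitian flattening $\mathfrak{m}$ is the linear map sending $[v_1,v_2]_{\otimes_h}$ to the Kronecker product $(v_1v_1^* )\boxtimes(v_2v_2^* )$; equivalently $\mathfrak{m}(\mathcal{H})$ is the $4\times 4$ matrix with entries $(\mathfrak{m}(\mathcal{H}))_{(i_1,i_2),(j_1,j_2)} = \mathcal{H}_{i_1 i_2 j_1 j_2}$ (rows/columns indexed lexicographically). For square matrices $Q_1,Q_2$, the multilinear congruent transformation is $(Q_1,Q_2)\times_{cong}\mathcal{H} := (Q_1,Q_2,\overline{Q_1},\overline{Q_2})\times \mathcal{H}$, where $(M_1,\dots,M_4)\times$ is the multilinear matrix-tensor product, linear and satisfying $(M_1,\dots,M_4)\times(w_1\otimes\cdots\otimes w_4) = (M_1w_1)\otimes\cdots\otimes(M_4w_4)$.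 *)

From HB Require Import structures.
From mathcomp Require Import all_boot all_order all_algebra.
From mathcomp Require Import reals.
Set Implicit Arguments. Unset Strict Implicit. Unset Printing Implicit Defensive.
Import Order.TTheory GRing.Theory Num.Theory.
Local Open Scope ring_scope.

Definition tensor (R : realType) := 'I_2 -> 'I_2 -> 'I_2 -> 'I_2 -> R.

Definition is_hermitian (R : realType) (H : tensor R) : Prop :=
  forall i1 i2 j1 j2, H i1 i2 j1 j2 = H j1 j2 i1 i2.

(* [v1,v2]_{(x)h} = v1 (x) v2 (x) conj v1 (x) conj v2; for real vectors conj = id. *)
Definition htensor (R : realType) (v1 v2 : 'cV[R]_2) : tensor R :=
  fun a b c d => v1 a 0 * v2 b 0 * v1 c 0 * v2 d 0.

Definition R_hermitian_decomposable (R : realType) (H : tensor R) : Prop :=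
  is_hermitian H /\
  exists (r : nat) (lam : 'I_r -> R) (u1 u2 : 'I_r -> 'cV[R]_2),
    forall a b c d, H a b c d = \sum_(i < r) lam i * htensor (u1 i) (u2 i) a b c d.

Definition hflat (R : realType) (H : tensor R) : 'M[R]_4 :=
  \matrix_(p < 4, q < 4)
    H (inord (p %/ 2)) (inord (p %% 2)) (inord (q %/ 2)) (inord (q %% 2)).

Definition mlprod (R : realType) (M1 M2 M3 M4 : 'M[R]_2) (H : tensor R) : tensor R :=
  fun a b c d => \sum_(i < 2) \sum_(j < 2) \sum_(k < 2) \sum_(l < 2)
     M1 a i * M2 b j * M3 c k * M4 d l * H i j k l.

(* Multilinear congruent transformation (Q1,Q2) x_cong H = (Q1,Q2,conj Q1,conj Q2) x H;
   for real matrices conj Qi = Qi. *)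
Definition cong (R : realType) (Q1 Q2 : 'M[R]_2) (H : tensor R) : tensor R :=
  mlprod Q1 Q2 Q1 Q2 H.

Definition is_sym2 (R : realType) (M : 'M[R]_2) : Prop := M^T = M.

Definition posdef (R : realType) (M : 'M[R]_2) : Prop :=
  is_sym2 M /\ forall x : 'cV[R]_2, x != 0 -> 0 < (x^T *m M *m x) 0 0.

Definition negdef (R : realType) (M : 'M[R]_2) : Prop := posdef (- M).

(* Write m(H) in 2x2 blocks [A C; C B].  A congruence (P, Q) acts on them in two
   independent ways: Q by X |-> Q X Q^T on every block, and P by mixing the blocks like
   the coefficients of a binary quadratic form, block (i, k) becoming
   sum_(a, b) P_ia P_kb (block a b).  If A = B = 0 a rotation Q diagonalizing C is enough.
   Otherwise a triangular P puts a nonzero M in {A, B} (a definite one if there is one)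
   in the corner and C + t M next to it, which reduces everything to the pair
   (M, C + t M) of symmetric 2x2 matrices under simultaneous congruence.  By Sylvester's
   law M is congruent to +-I, to [0 1; 1 0] = I - (1,-1)(1,-1)^T or to
   +-diag(1, 0) = +-(I - e2 e2^T); in each case a suitable t and a congruence keeping the
   shape s (I - u u^T) of M make C + t M diagonal, with u = 0 in the definite case. *)

From HB Require Import structures.
From mathcomp Require Import all_boot all_order all_algebra.
From mathcomp Require Import reals.
From mathcomp Require Import ring lra.
From Stdlib Require Import Classical_Prop.
Import Order.TTheory GRing.Theory Num.Theory.
Local Open Scope ring_scope.
Set Implicit Arguments. Unset Strict Implicit. Unset Printing Implicit Defensive.

Lemma ord_splitP m n (p : 'I_(m + n)) :
  (exists j, p = lshift n j) \/ (exists j, p = rshift m j).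
Proof. by rewrite -(splitK p); case: (split p) => j; [left | right]; exists j. Qed.

Lemma sum2 (V : nmodType) (f : 'I_2 -> V) : \sum_(i < 2) f i = f ord0 + f ord_max.
Proof. by rewrite big_ord_recr big_ord1; congr (f _ + f _); apply: val_inj. Qed.

Section TwoByTwo.
Variable R : comNzRingType.
Implicit Types (a b c d x y t : R) (M N Q : 'M[R]_2).

Lemma ord2P (i : 'I_2) : i = ord0 \/ i = ord_max.
Proof. by case: i => [[|[|//]] ?]; [left | right]; apply: val_inj. Qed.

Definition m2 a b c d : 'M[R]_2 :=
  \matrix_(i, j) if i == ord0 then (if j == ord0 then a else b)
                 else (if j == ord0 then c else d).

Definition c2 x y : 'cV[R]_2 := \col_i if i == ord0 then x else y.

Local Ltac entrywise := apply/matrixP; do 2 (move=> /ord2P-[]->); rewrite !mxE.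

Lemma m2E M : M = m2 (M ord0 ord0) (M ord0 ord_max) (M ord_max ord0) (M ord_max ord_max).
Proof. by entrywise. Qed.

Lemma sym_m2 M : M^T = M -> exists a b c, M = m2 a b b c.
Proof.
move=> sM; exists (M ord0 ord0), (M ord0 ord_max), (M ord_max ord_max).
have e : M ord_max ord0 = M ord0 ord_max by rewrite -[in LHS]sM mxE.
by rewrite {1}(m2E M) e.
Qed.

Lemma mulm2 a b c d a' b' c' d' :
  m2 a b c d *m m2 a' b' c' d' = m2 (a*a' + b*c') (a*b' + b*d') (c*a' + d*c') (c*b' + d*d').
Proof.
by apply/matrixP => i j; rewrite !mxE sum2 !mxE; case: (ord2P i) => ->; case: (ord2P j) => ->.
Qed.

Lemma trm2 a b c d : (m2 a b c d)^T = m2 a c b d.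
Proof. by entrywise. Qed.

Lemma addm2 a b c d a' b' c' d' :
  m2 a b c d + m2 a' b' c' d' = m2 (a + a') (b + b') (c + c') (d + d').
Proof. by entrywise. Qed.

Lemma subm2 a b c d a' b' c' d' :
  m2 a b c d - m2 a' b' c' d' = m2 (a - a') (b - b') (c - c') (d - d').
Proof. by entrywise. Qed.

Lemma scalem2 t a b c d : t *: m2 a b c d = m2 (t * a) (t * b) (t * c) (t * d).
Proof. by entrywise. Qed.

Lemma scalar_m2 t : t%:M = m2 t 0 0 t.
Proof. by entrywise. Qed.

Lemma m2_0 : 0 = m2 0 0 0 0.
Proof. by entrywise. Qed.

Lemma c2_outer x y : c2 x y *m (c2 x y)^T = m2 (x * x) (x * y) (y * x) (y * y).
Proof.
by apply/matrixP => i j; rewrite !mxE big_ord1 !mxE; case: (ord2P i) => ->; case: (ord2P j) => ->.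
Qed.

Lemma c2_quadform x y a b c d :
  ((c2 x y)^T *m m2 a b c d *m c2 x y) 0 0 = x * (a * x + b * y) + y * (c * x + d * y).
Proof. by rewrite !mxE sum2 !mxE !sum2 !mxE /=; ring. Qed.

Lemma c2_eq0 x y : (c2 x y == 0) = (x == 0) && (y == 0).
Proof.
apply/eqP/andP => [e | [/eqP-> /eqP->]].
  by move: (congr1 (fun v : 'cV_2 => v ord0 0) e) (congr1 (fun v : 'cV_2 => v ord_max 0) e);
    rewrite !mxE /= => -> ->; rewrite eqxx.
by apply/matrixP => i j; rewrite !mxE; case: (ord2P i) => ->.
Qed.

Lemma diag_m2 a b c d : is_diag_mx (m2 a b c d) = (b == 0) && (c == 0).
Proof.
apply/is_diag_mxP/andP => [dM | [/eqP b0 /eqP c0] i j].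
  by move: (dM ord0 ord_max isT) (dM ord_max ord0 isT); rewrite !mxE /= => -> ->.
by case: (ord2P i) => ->; case: (ord2P j) => ->; rewrite mxE.
Qed.

Definition congmx Q M := Q *m M *m Q^T.

Lemma congmx_m2 q0 q1 q2 q3 a b c d : congmx (m2 q0 q1 q2 q3) (m2 a b c d) =
  m2 ((q0*a + q1*c)*q0 + (q0*b + q1*d)*q1) ((q0*a + q1*c)*q2 + (q0*b + q1*d)*q3)
     ((q2*a + q3*c)*q0 + (q2*b + q3*d)*q1) ((q2*a + q3*c)*q2 + (q2*b + q3*d)*q3).
Proof. by rewrite /congmx trm2 !mulm2. Qed.

Lemma congmx0 Q : congmx Q 0 = 0.
Proof. by rewrite /congmx mulmx0 mul0mx. Qed.

Lemma congmx1 M : congmx 1%:M M = M.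
Proof. by rewrite /congmx trmx1 mul1mx mulmx1. Qed.

Lemma congmxM Q1 Q2 M : congmx (Q2 *m Q1) M = congmx Q2 (congmx Q1 M).
Proof. by rewrite /congmx trmx_mul !mulmxA. Qed.

Lemma congmxD Q M N : congmx Q (M + N) = congmx Q M + congmx Q N.
Proof. by rewrite /congmx mulmxDr mulmxDl. Qed.

Lemma congmxZ Q M t : congmx Q (t *: M) = t *: congmx Q M.
Proof. by rewrite /congmx -scalemxAr -scalemxAl. Qed.

Lemma congmx_tr Q M : (congmx Q M)^T = congmx Q M^T.
Proof. by rewrite /congmx !trmx_mul trmxK mulmxA. Qed.

End TwoByTwo.

Section TwoByTwoUnits.
Variable R : fieldType.

Lemma congmx_unit (Q M : 'M[R]_2) : congmx Q M \in unitmx -> Q \in unitmx.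
Proof. by rewrite !unitmx_mul unitmx_tr => /andP[/andP[]]. Qed.

Lemma m2_unit (a b c d : R) : a * d - b * c != 0 -> m2 a b c d \in unitmx.
Proof.
move=> det_neq0.
have [] // := @mulmx1_unit _ _ (m2 a b c d) ((a * d - b * c)^-1 *: m2 d (- b) (- c) a).
by rewrite -scalemxAr mulm2 scalem2 scalar_m2; congr m2; field.
Qed.

End TwoByTwoUnits.

Section NormalForms.
Variable R : rcfType.
Implicit Types (a b c s t : R) (M N Q : 'M[R]_2) (u : 'cV[R]_2).

Lemma sqrtr_mul_self x : 0 <= x -> Num.sqrt x * Num.sqrt x = x :> R.
Proof. by move=> x_ge0; rewrite -expr2 sqr_sqrtr. Qed.

Lemma signed_square x : x != 0 -> exists s r, [/\ s = 1 \/ s = -1, r != 0 & x = s * (r * r)].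
Proof.
case: ltrgtP => // x_sign _.
- exists (-1), (Num.sqrt (- x)); split; [by right | by rewrite sqrtr_eq0 -ltNge oppr_gt0 |].
  by rewrite sqrtr_mul_self ?oppr_ge0 ?ltW // mulN1r opprK.
- exists 1, (Num.sqrt x); split; [by left | by rewrite sqrtr_eq0 -ltNge |].
  by rewrite sqrtr_mul_self ?ltW // mul1r.
Qed.

Lemma orthogonal_diagonalization N : N^T = N ->
  exists Q, [/\ Q \in unitmx, Q *m Q^T = 1%:M & is_diag_mx (congmx Q N)].
Proof.
move=> /sym_m2[a [b [c ->]]].
have [->|b_neq0] := eqVneq b 0.
  by exists 1%:M; rewrite unitmx1 trmx1 mulmx1 congmx1 diag_m2 eqxx.
(* [(b, l - a)] is an eigenvector for the larger eigenvalue [l]. *)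
pose r := Num.sqrt ((a - c) * (a - c) + 4 * b * b).
have r2 : r * r = (a - c) * (a - c) + 4 * b * b.
  by rewrite sqrtr_mul_self //; have := sqr_ge0 (a - c); have := sqr_ge0 b; rewrite !expr2; lra.
pose l := (a + c + r) / 2.
have char_l : l * l - (a + c) * l + (a * c - b * b) = 0 by rewrite /l; lra.
pose k := b * b + (l - a) * (l - a).
have k_gt0 : 0 < k by rewrite /k ltr_pwDl -?expr2 ?sqr_ge0 // exprn_even_gt0.
pose n := (Num.sqrt k)^-1.
have n2k : n * n * k = 1.
  by rewrite /n -[X in _ * X](sqrtr_mul_self (ltW k_gt0)); field; rewrite gt_eqF ?sqrtr_gt0.
pose Q := m2 (b * n) ((l - a) * n) ((a - l) * n) (b * n).
have QQt : Q *m Q^T = 1%:M.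
  by rewrite trm2 mulm2 scalar_m2; congr m2; rewrite /k in n2k; lra.
exists Q; split => //; first by case: (mulmx1_unit QQt).
have off_diag : b * n * n * (l * l - (a + c) * l + (a * c - b * b)) = 0 by rewrite char_l mulr0.
by rewrite congmx_m2 diag_m2; apply/andP; split; apply/eqP; lra.
Qed.

Lemma congmx_posdef a b c : 0 < a -> 0 < a * c - b * b ->
  exists2 Q, Q \in unitmx & congmx Q (m2 a b b c) = 1%:M.
Proof.
move=> a_gt0 det_gt0; pose sa := Num.sqrt a; pose sd := Num.sqrt (a * c - b * b).
have sa_neq0 : sa != 0 by rewrite gt_eqF ?sqrtr_gt0.
have sd_neq0 : sd != 0 by rewrite gt_eqF ?sqrtr_gt0.
have ea : a = sa * sa by rewrite sqrtr_mul_self ?ltW.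
have ec : c = (sd * sd + b * b) / (sa * sa).
  by rewrite -ea sqrtr_mul_self ?(ltW det_gt0) //; field; apply: lt0r_neq0.
have QM : congmx (m2 sa^-1 0 (- b / (sa * sd)) (sa / sd)) (m2 a b b c) = 1%:M.
  by rewrite ec ea congmx_m2 scalar_m2; congr m2; field; rewrite ?sa_neq0 ?sd_neq0.
exists (m2 sa^-1 0 (- b / (sa * sd)) (sa / sd)) => //.
by apply: (congmx_unit (M := m2 a b b c)); rewrite QM unitmx1.
Qed.

Lemma congmx_definite a b c : 0 < a * c - b * b ->
  exists Q s, [/\ Q \in unitmx, s = 1 \/ s = -1 & congmx Q (m2 a b b c) = s%:M].
Proof.
move=> det_gt0; have [a_lt0|a_gt0|a0] := ltrgtP a 0.
- have [Q QU QM] : exists2 Q, Q \in unitmx & congmx Q (m2 (- a) (- b) (- b) (- c)) = 1%:M.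
    by apply: congmx_posdef; lra.
  exists Q, (-1); split => //; first by right.
  have -> : m2 a b b c = (-1) *: m2 (- a) (- b) (- b) (- c) by rewrite scalem2 !mulN1r !opprK.
  by rewrite congmxZ QM scalemx1.
- by have [Q QU QM] := congmx_posdef a_gt0 det_gt0; exists Q, 1; split => //; left.
- by move: det_gt0; rewrite a0 mul0r sub0r oppr_gt0 ltNge -expr2 sqr_ge0.
Qed.

Lemma congmx_hyperbolic a b c : a * c - b * b < 0 ->
  exists2 Q, Q \in unitmx & congmx Q (m2 a b b c) = m2 0 1 1 0.
Proof.
move=> det_lt0.
suff [Q QM] : exists Q, congmx Q (m2 a b b c) = m2 0 1 1 0.
  exists Q => //; apply: (congmx_unit (M := m2 a b b c)); rewrite QM m2_unit //.
  by rewrite mul0r sub0r mulr1 oppr_eq0 oner_eq0.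
have [a0|a_neq0] := eqVneq a 0.
  have b_neq0 : b != 0 by apply: contraTneq det_lt0 => b0; rewrite a0 b0 !mul0r subr0 ltxx.
  by exists (m2 1 0 (- c / (2 * b * b)) b^-1); rewrite a0 congmx_m2; congr m2; field.
(* The rows are the two isotropic vectors [(-b +- r, a)] of the form, suitably rescaled. *)
pose r := Num.sqrt (b * b - a * c).
have r_neq0 : r != 0 by rewrite gt_eqF // sqrtr_gt0; lra.
have ec : c = (b * b - r * r) / a by rewrite sqrtr_mul_self; [field | lra].
exists (m2 (- b + r) a ((b + r) / (2 * a * r * r)) (- (2 * r * r)^-1)).
by rewrite ec congmx_m2; congr m2; field; rewrite ?a_neq0 ?r_neq0.
Qed.

Lemma congmx_rank1 a b c : a * c = b * b -> m2 a b b c != 0 ->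
  exists Q s, [/\ Q \in unitmx, s = 1 \/ s = -1 & congmx Q (m2 a b b c) = m2 s 0 0 0].
Proof.
move=> det0 M_neq0; have [a0|a_neq0] := eqVneq a 0.
  have b0 : b = 0 by apply/eqP; rewrite -[b == 0]orbb -mulf_eq0 -det0 a0 mul0r.
  have c_neq0 : c != 0 by apply: contraNneq M_neq0 => c0; rewrite a0 b0 c0 -m2_0.
  have [s [r [hs r_neq0 ec]]] := signed_square c_neq0.
  exists (m2 0 r^-1 1 0), s; split => //.
    by rewrite m2_unit // mul0r sub0r mulr1 oppr_eq0 invr_eq0.
  by rewrite a0 b0 ec congmx_m2; congr m2; field.
have [s [r [hs r_neq0 ea]]] := signed_square a_neq0.
have ec : c = b * b / a by rewrite -det0; field.
exists (m2 r^-1 0 (- b / a) 1), s; split => //.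
  by rewrite m2_unit // mul0r subr0 mulr1 invr_eq0.
have s_neq0 : s != 0 by case: hs => ->; rewrite ?oppr_eq0 oner_eq0.
by rewrite ec ea congmx_m2; congr m2; field; rewrite r_neq0 s_neq0.
Qed.

Definition pencil_reducible M N s u := exists t Q,
  [/\ Q \in unitmx, congmx Q M = s%:M - s *: (u *m u^T)
    & is_diag_mx (congmx Q (N + t *: M))].

Lemma pencil_reducible_congmx Q M N s u : Q \in unitmx ->
  pencil_reducible (congmx Q M) (congmx Q N) s u -> pencil_reducible M N s u.
Proof.
move=> QU [t [Q' [Q'U Q'M Q'D]]]; exists t, (Q' *m Q).
by rewrite unitmx_mul Q'U QU !congmxM congmxD congmxZ.
Qed.

Lemma pencil_reducible_scalar s N : N^T = N -> pencil_reducible s%:M N s 0.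
Proof.
move=> /orthogonal_diagonalization[Q [QU QQt QD]]; exists 0, Q.
by rewrite scale0r addr0 mul0mx scaler0 subr0 -scalemx1 congmxZ /congmx mulmx1 QQt scalemx1.
Qed.

Lemma pencil_reducible_hyperbolic N : N^T = N ->
  pencil_reducible (m2 0 1 1 0) N 1 (c2 1 (-1)).
Proof.
move=> /sym_m2[n0 [n1 [n2 ->]]]; exists (- n1), 1%:M; split; first exact: unitmx1.
  by rewrite congmx1 scale1r c2_outer scalar_m2 subm2; congr m2; ring.
by rewrite congmx1 scalem2 addm2 diag_m2; apply/andP; split; apply/eqP; ring.
Qed.

Lemma pencil_reducible_rank1 s N : s = 1 \/ s = -1 -> N^T = N ->
  exists u, pencil_reducible (m2 s 0 0 0) N s u.
Proof.
move=> hs /sym_m2[a [b [c ->]]].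
have [->|c_neq0] := eqVneq c 0; last first.
  exists (c2 0 1), 0, (m2 1 (- b / c) 0 1); split.
  - by rewrite m2_unit // mulr1 mulr0 subr0 oner_eq0.
  - by rewrite scalar_m2 c2_outer scalem2 subm2 congmx_m2; congr m2; ring.
  - by rewrite scale0r addr0 congmx_m2 diag_m2; apply/andP; split; apply/eqP; field.
(* With [t = s (1 - a)], [N + t M] becomes [m2 1 b b 0], which [Q] diagonalizes. *)
pose r := (Num.sqrt (1 + b * b))^-1.
have r2 : r * r * (1 + b * b) = 1.
  have pos : 0 < 1 + b * b by rewrite ltr_pwDl -?expr2 ?sqr_ge0.
  by rewrite /r -[X in _ * X](sqrtr_mul_self (ltW pos)); field; rewrite gt_eqF ?sqrtr_gt0.
have r_neq0 : r != 0 by apply: contra_eq_neq r2 => ->; rewrite !mul0r eq_sym oner_eq0.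
exists (c2 (- b * r) r), (s * (1 - a)), (m2 r 0 (b * r) (- r)); split.
- by rewrite m2_unit // mul0r subr0 mulrN oppr_eq0 mulf_neq0.
- rewrite scalar_m2 c2_outer scalem2 subm2 congmx_m2; congr m2; case: hs => ->; lra.
- rewrite scalem2 addm2 congmx_m2 diag_m2; apply/andP; split; apply/eqP; case: hs => ->; ring.
Qed.

End NormalForms.

Section Definite.
Variable R : realType.
Implicit Types (a b c : R) (M N : 'M[R]_2).

Lemma posdef_neq0 M : posdef M -> M != 0.
Proof.
move=> [_ pd]; apply/eqP => M0.
by have := pd (c2 1 0); rewrite c2_eq0 oner_eq0 M0 mulmx0 mul0mx mxE ltxx => /(_ isT).
Qed.

Lemma definite_neq0 M : posdef M \/ negdef M -> M != 0.
Proof. by case=> [/posdef_neq0 // | /posdef_neq0]; rewrite oppr_eq0. Qed.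

Lemma posdef_m2_det a b c : posdef (m2 a b b c) -> 0 < a * c - b * b.
Proof.
move=> [_ pd]; have := pd (c2 1 0).
rewrite c2_eq0 oner_eq0 c2_quadform => /(_ isT) a_gt0; have {}a_gt0 : 0 < a by lra.
have := pd (c2 (- b) a).
rewrite c2_eq0 (gt_eqF a_gt0) andbF c2_quadform => /(_ isT) qf_gt0.
by rewrite -(pmulr_rgt0 _ a_gt0); lra.
Qed.

Lemma definite_m2_det a b c :
  posdef (m2 a b b c) \/ negdef (m2 a b b c) -> 0 < a * c - b * b.
Proof.
case=> [/posdef_m2_det // | ]; rewrite /negdef -scaleN1r scalem2 !mulN1r => /posdef_m2_det.
by rewrite !mulrNN.
Qed.

Lemma pencil_normal_form M N : M^T = M -> N^T = N -> M != 0 ->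
  exists s u, [/\ s = 1 \/ s = -1, pencil_reducible M N s u
    & (posdef M \/ negdef M -> u = 0)].
Proof.
move=> /sym_m2[a [b [c ->]]] sN M_neq0.
have sNQ Q : (congmx Q N)^T = congmx Q N by rewrite congmx_tr sN.
have [det_lt0|det_gt0|det0] := ltrgtP (a * c - b * b) 0.
- have [Q QU QM] := congmx_hyperbolic det_lt0.
  exists 1, (c2 1 (-1)); split; [by left | | by move/definite_m2_det; rewrite ltNge ltW].
  by apply: (pencil_reducible_congmx QU); rewrite QM; apply: pencil_reducible_hyperbolic.
- have [Q [s [QU hs QM]]] := congmx_definite det_gt0.
  exists s, 0; split => //.
  by apply: (pencil_reducible_congmx QU); rewrite QM; apply: pencil_reducible_scalar.
- have [|Q [s [QU hs QM]]] := congmx_rank1 _ M_neq0.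
    by apply/eqP; rewrite -subr_eq0 det0.
  have [u red] := pencil_reducible_rank1 hs (sNQ Q).
  exists s, u; split; [by [] | | by move/definite_m2_det; rewrite det0 ltxx].
  by apply: (pencil_reducible_congmx QU); rewrite QM.
Qed.

Lemma leading_block A B : ~~ ((A == 0) && (B == 0)) ->
  exists M, [/\ M = A \/ M = B, M != 0 &
    (posdef A \/ negdef A \/ posdef B \/ negdef B -> posdef M \/ negdef M)].
Proof.
move=> AB_neq0; have [A0|A_neq0] := eqVneq A 0.
  have A_ndef : ~ (posdef A \/ negdef A) by move=> /definite_neq0; rewrite A0 eqxx.
  exists B; split; [by right | by move: AB_neq0; rewrite A0 eqxx | tauto].
have [B_def|B_ndef] := classic (posdef B \/ negdef B).
  by exists B; split; [right | exact: (definite_neq0 B_def) | move=> _].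
by exists A; split; [left | | tauto].
Qed.

End Definite.

Section Flattening.
Variable R : realType.
Implicit Types (H : tensor R) (A B C M P Q : 'M[R]_2) (u : 'cV[R]_2).

Definition hblock H (i k : 'I_2) : 'M[R]_2 := \matrix_(j, l) H i j k l.

Lemma hflat_block H : hflat H =
  block_mx (hblock H ord0 ord0) (hblock H ord0 ord_max)
           (hblock H ord_max ord0) (hblock H ord_max ord_max).
Proof.
have lo (j : 'I_2) :
    (inord (lshift 2 j %/ 2) : 'I_2) = ord0 /\ (inord (lshift 2 j %% 2) : 'I_2) = j.
  by split; apply: val_inj; case: (ord2P j) => -> /=; rewrite inordK.
have hi (j : 'I_2) :
    (inord (rshift 2 j %/ 2) : 'I_2) = ord_max /\ (inord (rshift 2 j %% 2) : 'I_2) = j.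
  by split; apply: val_inj; case: (ord2P j) => -> /=; rewrite inordK.
apply/(@matrixP _ (2 + 2) (2 + 2)) => p q; rewrite mxE.
case: (ord_splitP p) => -[j ->]; case: (ord_splitP q) => -[l ->];
  rewrite ?block_mxEul ?block_mxEur ?block_mxEdl ?block_mxEdr mxE.
- by case: (lo j) => -> ->; case: (lo l) => -> ->.
- by case: (lo j) => -> ->; case: (hi l) => -> ->.
- by case: (hi j) => -> ->; case: (lo l) => -> ->.
- by case: (hi j) => -> ->; case: (hi l) => -> ->.
Qed.

Lemma hblock_cong H P Q i k :
  hblock (cong P Q H) i k = congmx Q (\sum_a \sum_b (P i a * P k b) *: hblock H a b).
Proof.
apply/matrixP => j l; rewrite /cong /mlprod /congmx.
by rewrite !(mxE, summxE, sum2); ring.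
Qed.

Definition block_mix A B C P (i k : 'I_2) : 'M[R]_2 :=
  (P i ord0 * P k ord0) *: A + (P i ord0 * P k ord_max + P i ord_max * P k ord0) *: C
  + (P i ord_max * P k ord_max) *: B.

Lemma block_mixC A B C P i k : block_mix A B C P i k = block_mix A B C P k i.
Proof. by rewrite /block_mix; congr (_ *: _ + _ *: _ + _ *: _); ring. Qed.

Lemma block_mix_tr A B C P i k : A^T = A -> B^T = B -> C^T = C ->
  (block_mix A B C P i k)^T = block_mix A B C P i k.
Proof. by move=> sA sB sC; rewrite /block_mix !linearD !linearZ /= sA sB sC. Qed.

Lemma hflat_cong H A B C P Q : hflat H = block_mx A C C B ->
  hflat (cong P Q H) =
    block_mx (congmx Q (block_mix A B C P ord0 ord0))
             (congmx Q (block_mix A B C P ord0 ord_max))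
             (congmx Q (block_mix A B C P ord0 ord_max))
             (congmx Q (block_mix A B C P ord_max ord_max)).
Proof.
rewrite !hflat_block => /(@eq_block_mx _ 2 2 2 2)[hA hC hC' hB].
have mix i k : \sum_a \sum_b (P i a * P k b) *: hblock H a b = block_mix A B C P i k.
  by apply/matrixP => j l; rewrite !sum2 hA hC hC' hB !mxE; ring.
by rewrite !hblock_cong !mix (block_mixC _ _ _ _ ord_max).
Qed.

Lemma block_mix1 A B C : [/\ block_mix A B C 1%:M ord0 ord0 = A,
  block_mix A B C 1%:M ord0 ord_max = C & block_mix A B C 1%:M ord_max ord_max = B].
Proof. by split; apply/matrixP => j l; rewrite !mxE /=; ring. Qed.

Lemma block_mix_lead A B C M t : M = A \/ M = B ->
  exists2 P, P \in unitmx &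
    block_mix A B C P ord0 ord0 = M /\ block_mix A B C P ord0 ord_max = C + t *: M.
Proof.
case=> ->; [exists (m2 1 0 t 1) | exists (m2 0 1 1 t)];
  rewrite ?m2_unit ?mulr1 ?mul0r ?subr0 ?sub0r ?oppr_eq0 ?oner_eq0 //;
  by split; apply/matrixP => j l; rewrite !mxE /=; ring.
Qed.

Lemma hflat_cong_normal_form H A B C P Q s u :
  A^T = A -> B^T = B -> C^T = C -> hflat H = block_mx A C C B ->
  congmx Q (block_mix A B C P ord0 ord0) = s%:M - s *: (u *m u^T) ->
  is_diag_mx (congmx Q (block_mix A B C P ord0 ord_max)) ->
  (s = 1 \/ s = -1) \/ block_mix A B C P ord_max ord_max = 0 ->
  exists D Bt, [/\ is_diag_mx D, is_sym2 Bt &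
    hflat (cong P Q H) = block_mx s%:M D D (s *: Bt) - s *: block_mx (u *m u^T) 0 0 0].
Proof.
move=> sA sB sC hH QM QD; set F := block_mix A B C P ord_max ord_max => hs.
exists (congmx Q (block_mix A B C P ord0 ord_max)), (s *: congmx Q F); split => //.
  by rewrite /is_sym2 linearZ /= congmx_tr block_mix_tr.
rewrite (hflat_cong _ _ hH) scale_block_mx opp_block_mx add_block_mx.
rewrite !scaler0 !oppr0 !addr0 -QM.
rewrite scalerA (_ : s * s *: congmx Q F = congmx Q F) //.
by case: hs => [[]->|->]; rewrite ?mulrNN ?mulr1 ?scale1r // congmx0 scaler0.
Qed.

End Flattening.

Theorem proposition4p2 (R : realType) (H : tensor R) (A B C : 'M[R]_2) :
  R_hermitian_decomposable H ->
  is_sym2 A -> is_sym2 B -> is_sym2 C ->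
  hflat H = block_mx A C C B ->
  exists (P Q : 'M[R]_2) (s : R) (D : 'M[R]_2) (u : 'cV[R]_2) (Bt : 'M[R]_2),
    [/\ P \in unitmx, Q \in unitmx & s = 0 \/ s = 1 \/ s = -1] /\
    [/\ is_diag_mx D, is_sym2 Bt &
        hflat (cong P Q H) =
          block_mx (s%:M) D D (s *: Bt) - s *: block_mx (u *m u^T) 0 0 0] /\
    (posdef A \/ negdef A \/ posdef B \/ negdef B -> u = 0) /\
    (A = 0 /\ B = 0 -> s = 0).
Proof.
move=> _ sA sB sC hH.
have [/andP[/eqP A0 /eqP B0] | AB_neq0] := boolP ((A == 0) && (B == 0)).
  have [Q [QU _ QC]] := orthogonal_diagonalization sC.
  have [mixA mixC mixB] := block_mix1 A B C.
  have corner :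
      congmx Q (block_mix A B C 1%:M ord0 ord0) = (0 : R)%:M - 0 *: ((0 : 'cV_2) *m 0^T).
    by rewrite mixA A0 congmx0 scale0r subr0 raddf0.
  have diag : is_diag_mx (congmx Q (block_mix A B C 1%:M ord0 ord_max)) by rewrite mixC.
  have [D [Bt [DD sBt fl]]] :=
    hflat_cong_normal_form sA sB sC hH corner diag (or_intror (etrans mixB B0)).
  exists 1%:M, Q, 0, D, 0, Bt.
  by split; [rewrite unitmx1; split => //; left | split; [ | split=> _]].
have [M [MAB M_neq0 M_def]] := leading_block AB_neq0.
have sM : M^T = M by case: MAB => ->.
have [s [u [hs [t [Q [QU QM QD]]] u0]]] := pencil_normal_form sM sC M_neq0.
have [P PU [PM PC]] := block_mix_lead C t MAB.
have corner : congmx Q (block_mix A B C P ord0 ord0) = s%:M - s *: (u *m u^T).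
  by rewrite PM.
have diag : is_diag_mx (congmx Q (block_mix A B C P ord0 ord_max)) by rewrite PC.
have [D [Bt [DD sBt fl]]] := hflat_cong_normal_form sA sB sC hH corner diag (or_introl hs).
exists P, Q, s, D, u, Bt; split; first by split => //; right.
split => //; split; first by move/M_def/u0.
by case=> A0 B0; move: AB_neq0; rewrite A0 B0 eqxx.
Qed.
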